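(* Let $n\ge1$, $m\ge2$, let $v$ be a vertex of $Y_{n,m}$ and let $p$ be a pivot of $v$. Then $\operatorname{ps}_p(v)=\sum_{i=1}^{p}iv_i+\sum_{i=p+1}^{m}(m+1-i)v_i$. In particular, if $p$ is an inner pivot, then $\operatorname{ps}_p(v)\le\binom{p+1}{2}+\binom{m-p+1}{2}$.
   Context: The Yoke graph $Y_{n,m}$ has vertices the tuples $v=(v_0,\dots,v_{m+1})$ with $v_0,v_{m+1}\in\mathbb{Z}_n$ (identified with their least non-negative representatives), $v_1,\dots,v_m\in\{0,1\}$, $\sum v_i\equiv0\pmod n$; $u\sim v$ iff $u=\overleftarrow{s}_i(v)$ or $u=\overrightarrow{s}_i(v)$ for some $0\le i\le m$, where $\overleftarrow{s}_i(v)$ replaces $v_i,v_{i+1}$ by $v_i+1,v_{i+1}-1$ and $\overrightarrow{s}_i(v)$ by $v_i-1,v_{i+1}+1$ (buckets mod $n$). A pivot of $v$ is an integer $-1\le p\le m+1$ with $n\mid\sum_{i=0}^{p}v_i$; $-1$ and $m+1$ are outer pivots, others are inner pivots. For a path $P$ from $v$ to the zero vertex $0$: $0\le p\le m$ is a wall if no step of $P$ changes entries $p,p+1$; $-1$ is a wall if no step of $P$ is a left shift $\overleftarrow{s}_0$; $m+1$ is a wall if no step is a right shift $\overrightarrow{s}_m$. For a pivot $p$ of $v$, $\operatorname{ps}_p(v)$ denotes the minimum length of a path from $v$ to $0$ having $p$ as a wall. *)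

From mathcomp Require Import all_boot all_order all_algebra.
From Stdlib Require Import ClassicalEpsilon.
Set Implicit Arguments. Unset Strict Implicit. Unset Printing Implicit Defensive.
Import Order.TTheory GRing.Theory Num.Theory.
Local Open Scope ring_scope.

(* A (candidate) vertex is a function v : nat -> int; only the entries
   v 0, ..., v (m+1) matter. *)
Definition is_vertex (n m : nat) (v : nat -> int) : Prop :=
  [/\ 0 <= v 0%N < n%:Z,
      0 <= v m.+1 < n%:Z,
      (forall i : nat, (1 <= i <= m)%N -> v i = 0 \/ v i = 1)
    & (n%:Z %| \sum_(i < m.+2) v i)%Z].

Definition bucket (n m : nat) (j : nat) (x : int) : int :=
  if (j == 0%N) || (j == m.+1) then (x %% n%:Z)%Z else x.

(* left = true : s_i^<- (v_i+1, v_{i+1}-1);  left = false : s_i^-> (v_i-1, v_{i+1}+1) *)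
Definition shift (n m : nat) (left : bool) (i : nat) (v : nat -> int) : nat -> int :=
  fun j => let d : int := if left then 1 else -1 in
    if j == i then bucket n m j (v j + d)
    else if j == i.+1 then bucket n m j (v j - d)
    else v j.

(* A path is given by its sequence of steps (i, left); each step applies the
   corresponding shift and must land on a vertex of Y_{n,m}. *)
Fixpoint is_walk (n m : nat) (v : nat -> int) (P : seq (nat * bool)) : Prop :=
  match P with
  | [::] => True
  | (i, b) :: P' => (i <= m)%N /\ is_vertex n m (shift n m b i v)
                    /\ is_walk n m (shift n m b i v) P'
  end.

Definition walk_end (n m : nat) (v : nat -> int) (P : seq (nat * bool)) : nat -> int :=
  foldl (fun w s => shift n m s.2 s.1 w) v P.

Definition is_path_to_zero (n m : nat) (v : nat -> int) (P : seq (nat * bool)) : Prop :=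
  is_walk n m v P /\ (forall j : nat, (j <= m.+1)%N -> walk_end n m v P j = 0).

Definition is_wall (m : nat) (p : int) (P : seq (nat * bool)) : Prop :=
  forall s, s \in P ->
    if p == -1 then ~~ ((s.1 == 0%N) && s.2)
    else if p == (m.+1)%:Z then ~~ ((s.1 == m) && ~~ s.2)
    else (s.1)%:Z != p.

Definition is_pivot (n m : nat) (v : nat -> int) (p : int) : Prop :=
  -1 <= p <= (m.+1)%:Z /\ (n%:Z %| \sum_(i < m.+2 | (i%:Z <= p)) v i)%Z.

Definition is_min_wall_len (n m : nat) (p : int) (v : nat -> int) (k : nat) : Prop :=
  (exists P, is_path_to_zero n m v P /\ is_wall m p P /\ size P = k) /\
  (forall P, is_path_to_zero n m v P -> is_wall m p P -> (k <= size P)%N).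

(* ps_p(v) : the minimum (chosen by classical choice; it is unique when it exists) *)
Definition ps (n m : nat) (p : int) (v : nat -> int) : nat :=
  epsilon (inhabits 0%N) (is_min_wall_len n m p v).

From mathcomp Require Import all_boot all_order all_algebra zify ring.
From Stdlib Require Import ClassicalEpsilon.
Import Order.TTheory GRing.Theory Num.Theory.
Local Open Scope ring_scope.

(* The right-hand side is a potential: the sum of the entries of v weighted by
   j to the left of the wall p and by m + 1 - j to its right, the outer
   buckets being weighted only when p is the corresponding outer pivot.  A
   step that does not cross the wall moves one unit between neighbouring
   positions, so it lowers the potential by at most one; hence every path to 0
   with wall p is at least that long.  Conversely, pushing the outermost 1 on
   either side of the wall one position away from it lowers the potential by
   exactly one and preserves vertices and the pivot; once no inner 1 is left,
   the potential lives on the outer bucket next to an outer wall, which can be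
   emptied one unit at a time.  A vertex of potential 0 having p as a pivot is
   0, so this descent is a path of the required length.  The binomial bound is
   the potential of the all-ones inner vector. *)

Lemma modz_range (n : nat) (x : int) : (0 < n)%N -> 0 <= (x %% n%:Z)%Z < n%:Z.
Proof. by move=> n_gt0; rewrite modz_ge0 ?ltz_pmod //; lia. Qed.

Lemma le_modz (n : nat) (x : int) : (0 < n)%N -> x < n%:Z -> x <= (x %% n%:Z)%Z.
Proof.
move=> n_gt0 x_lt; case: (ltP x 0) => [x_lt0 | x_ge0].
  by have := modz_range n x n_gt0; lia.
by rewrite modz_small //; lia.
Qed.

Lemma dvdz_small_eq0 (n : nat) (x : int) : (n%:Z %| x)%Z -> 0 <= x < n%:Z -> x = 0.
Proof. by move=> /dvdz_mod0P x_mod0 x_range; rewrite -(modz_small x_range). Qed.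

Lemma sum_eq_except2 (N a b : nat) (P : pred nat) (f g : nat -> int) :
  (a < N)%N -> (b < N)%N -> a != b ->
  (forall j, (j < N)%N -> j != a -> j != b -> f j = g j) ->
  \sum_(j < N | P j) f j = \sum_(j < N | P j) g j
     + ((if P a then f a - g a else 0) + (if P b then f b - g b else 0)).
Proof.
move=> lt_aN lt_bN neq_ab eq_fg.
rewrite !(big_mkcond (fun j : 'I_N => P j)) /=.
rewrite (bigD1 (Ordinal lt_aN)) // [in RHS](bigD1 (Ordinal lt_aN)) //=.
have neq_ba : Ordinal lt_bN != Ordinal lt_aN by rewrite eq_sym.
rewrite (bigD1 (Ordinal lt_bN)) // [in RHS](bigD1 (Ordinal lt_bN)) //=.
rewrite (eq_bigr (fun j : 'I_N => if P j then g j else 0)); last first.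
  by move=> j /andP [j_neq_a j_neq_b]; rewrite eq_fg.
by case: (P a); case: (P b); rewrite ?subr0 ?addr0; ring.
Qed.

Lemma sum_rev_bin2 a b : (\sum_(a <= j < b) (b.-1 - j))%N = 'C(b - a, 2).
Proof.
rewrite big_nat_rev -bin2_sum -{1}[a]add0n big_addn.
by apply: eq_big_nat => j /andP [_ lt_j]; lia.
Qed.

Section YokeGraph.

Variables (n m : nat).

Lemma bucket_inner j x : (1 <= j <= m)%N -> bucket n m j x = x.
Proof. by move=> j_inner; rewrite /bucket; case: ifP => //; lia. Qed.

Lemma bucket_first x : bucket n m 0 x = (x %% n%:Z)%Z.
Proof. by []. Qed.

Lemma bucket_last x : bucket n m m.+1 x = (x %% n%:Z)%Z.
Proof. by rewrite /bucket eqxx orbT. Qed.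

Lemma bucket_congr j x : (n%:Z %| bucket n m j x - x)%Z.
Proof.
rewrite /bucket; case: ifP => _; last by rewrite subrr dvdz0.
have -> : (x %% n%:Z)%Z - x = - ((x %/ n%:Z)%Z * n%:Z) by rewrite {2}(divz_eq x n); ring.
by rewrite rpredN dvdz_mull.
Qed.

Lemma shift_other b i w j : j != i -> j != i.+1 -> shift n m b i w j = w j.
Proof. by rewrite /shift => /negbTE -> /negbTE ->. Qed.

Lemma shift_at b i w : shift n m b i w i = bucket n m i (w i + (if b then 1 else -1)).
Proof. by rewrite /shift eqxx. Qed.

Lemma shift_atS b i w :
  shift n m b i w i.+1 = bucket n m i.+1 (w i.+1 - (if b then 1 else -1)).
Proof. by rewrite /shift (gtn_eqF (ltnSn i)) eqxx. Qed.

Lemma shift_inner_at b i w : (1 <= i <= m)%N ->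
  shift n m b i w i = w i + (if b then 1 else -1).
Proof. by move=> i_inner; rewrite shift_at bucket_inner. Qed.

Lemma shift_inner_atS b i w : (i < m)%N ->
  shift n m b i w i.+1 = w i.+1 - (if b then 1 else -1).
Proof. by move=> lt_im; rewrite shift_atS bucket_inner //; lia. Qed.

Lemma sum_shift b i w (Q : pred nat) : (i <= m)%N ->
  \sum_(j < m.+2 | Q j) shift n m b i w j = \sum_(j < m.+2 | Q j) w j
   + ((if Q i then shift n m b i w i - w i else 0)
      + (if Q i.+1 then shift n m b i w i.+1 - w i.+1 else 0)).
Proof.
by move=> le_im; apply: sum_eq_except2 => [|||j _ *]; rewrite ?shift_other //; lia.
Qed.

Lemma dvdz_sum_shift b i w (Q : pred nat) : (i <= m)%N -> Q i = Q i.+1 ->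
  (n%:Z %| \sum_(j < m.+2 | Q j) shift n m b i w j)%Z
  = (n%:Z %| \sum_(j < m.+2 | Q j) w j)%Z.
Proof.
move=> le_im Q_eq; rewrite sum_shift // -Q_eq.
case: (Q i); last by rewrite addr0.
apply: rpredDr; rewrite shift_at shift_atS.
set d : int := if b then 1 else -1.
have -> : bucket n m i (w i + d) - w i + (bucket n m i.+1 (w i.+1 - d) - w i.+1)
    = (bucket n m i (w i + d) - (w i + d))
      + (bucket n m i.+1 (w i.+1 - d) - (w i.+1 - d)) by ring.
by apply: rpredD; apply: bucket_congr.
Qed.

Lemma shift_vertex b i w : (0 < n)%N -> is_vertex n m w -> (i <= m)%N ->
  ((1 <= i)%N -> shift n m b i w i = 0 \/ shift n m b i w i = 1) ->
  ((i < m)%N -> shift n m b i w i.+1 = 0 \/ shift n m b i w i.+1 = 1) ->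
  is_vertex n m (shift n m b i w).
Proof.
move=> n_gt0 [w0_range wl_range w_inner w_sum] le_im at_i at_iS; split.
- case: (eqVneq i 0%N) => [-> | i_neq0]; first by rewrite shift_at modz_range.
  by rewrite shift_other //; lia.
- case: (eqVneq i m) => [-> | i_neqm]; first by rewrite shift_atS bucket_last modz_range.
  by rewrite shift_other //; lia.
- move=> j j_inner.
  case: (eqVneq j i) => [j_eq | j_neq_i]; first by rewrite j_eq; apply: at_i; lia.
  case: (eqVneq j i.+1) => [j_eq | j_neq_iS]; first by rewrite j_eq; apply: at_iS; lia.
  by rewrite shift_other //; apply: w_inner.
- by have := @dvdz_sum_shift b i w xpredT le_im erefl; rewrite /= => ->.
Qed.

Lemma vertex_ge0 w j : is_vertex n m w -> (j <= m.+1)%N -> 0 <= w j.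
Proof.
case=> /andP [w0_ge0 _] /andP [wl_ge0 _] w01 _ le_j.
case: (posnP j) => [-> // | j_gt0]; case: (ltnP j m.+1) => [lt_j | ge_j].
  by case: (w01 j) => [|->|->] //; lia.
by rewrite (_ : j = m.+1) //; lia.
Qed.

Lemma sum_outer (Q : pred nat) (f : nat -> int) : (forall j, (1 <= j <= m)%N -> f j = 0) ->
  \sum_(j < m.+2 | Q j) f j = (if Q 0%N then f 0%N else 0) + (if Q m.+1 then f m.+1 else 0).
Proof.
move=> f_inner; rewrite (@sum_eq_except2 m.+2 0 m.+1 Q f (fun=> 0)) //; last first.
  by move=> j lt_j *; rewrite f_inner //; lia.
by rewrite big1 // add0r !subr0.
Qed.

Definition wall_step (p : int) (s : nat * bool) : bool :=
  if p == -1 then ~~ ((s.1 == 0%N) && s.2)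
  else if p == (m.+1)%:Z then ~~ ((s.1 == m) && ~~ s.2)
  else (s.1)%:Z != p.

Lemma wall_stepE (p : int) i b : (i <= m)%N ->
  wall_step p (i, b) = [&& i%:Z != p, (p == -1) && (i == 0%N) ==> ~~ b
                         & (p == m.+1%:Z) && (i == m) ==> b].
Proof.
move=> le_im; rewrite /wall_step /=.
by case: ifP => ?; [|case: ifP => ?]; case: b; apply/idP/idP; lia.
Qed.

Lemma is_wall_cons (p : int) s P : is_wall m p (s :: P) <-> wall_step p s /\ is_wall m p P.
Proof.
split=> [wall | [wall_s wall_P] t]; last by rewrite in_cons => /predU1P [-> | /wall_P].
by split=> [|t t_in]; apply: wall; rewrite ?mem_head ?in_cons ?t_in ?orbT.
Qed.

Lemma shift_pivot (p : int) b i w : (i <= m)%N -> wall_step p (i, b) ->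
  is_pivot n m w p -> is_pivot n m (shift n m b i w) p.
Proof.
move=> le_im; rewrite wall_stepE // => wall [p_range w_pivot]; split=> //.
by rewrite (@dvdz_sum_shift b i w (fun j : nat => j%:Z <= p)) //; apply/idP/idP; lia.
Qed.

Lemma ps_of_min_wall_len (p : int) v k : is_min_wall_len n m p v k -> ps n m p v = k.
Proof.
move=> min_k; have [[P [path_P [wall_P <-]]] min_P] := min_k.
have [[Q [path_Q [wall_Q size_Q]]] min_ps] :=
  epsilon_spec (inhabits 0%N) (is_min_wall_len n m p v) (ex_intro _ k min_k).
rewrite -/(ps n m p v) in size_Q min_ps.
by apply/eqP; rewrite eqn_leq min_ps // -size_Q min_P.
Qed.

Section Potential.

Variable p : int.

Definition weight (j : nat) : int :=
  if (1 <= j)%N && (j%:Z <= p) then j%:Z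
  else if (p + 1 <= j%:Z) && (j <= m)%N then (m.+1 - j)%N%:Z else 0.

Definition potential (w : nat -> int) : int := \sum_(j < m.+2) weight j * w j.

Lemma weight_low j : (1 <= j)%N -> j%:Z <= p -> weight j = j%:Z.
Proof. by rewrite /weight => -> ->. Qed.

Lemma weight_high j : p < j%:Z -> (j <= m)%N -> weight j = (m.+1 - j)%N%:Z.
Proof. by rewrite /weight => lt_pj le_jm; rewrite ifN; [rewrite ifT|]; lia. Qed.

Lemma weight_first : 0 <= p -> weight 0 = 0.
Proof. by rewrite /weight => p_ge0; rewrite !ifN //; lia. Qed.

Lemma weight_last : p <= m%:Z -> weight m.+1 = 0.
Proof. by rewrite /weight => p_le; rewrite !ifN //; lia. Qed.

Lemma weight_ge0 j : 0 <= weight j.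
Proof. by rewrite /weight; case: ifP => _; [|case: ifP => _]; lia. Qed.

Lemma weight_inner_gt0 j : (1 <= j <= m)%N -> 0 < weight j.
Proof.
move=> j_inner; case: (lerP j%:Z p) => [le_jp | lt_pj].
  by rewrite weight_low //; lia.
by rewrite weight_high //; lia.
Qed.

Lemma potentialE w : potential w =
    \sum_(i < m.+2 | (1 <= i)%N && (i%:Z <= p)) (i%:Z * w i)
    + \sum_(i < m.+2 | (p + 1 <= i%:Z) && (i <= m)%N) ((m.+1 - i)%N%:Z * w i).
Proof.
rewrite /potential [X in _ = X + _]big_mkcond [X in _ = _ + X]big_mkcond -big_split /=.
by apply: eq_bigr => j _; rewrite /weight; repeat case: ifP => ?; lia.
Qed.

Lemma potential_shift b i w : (i <= m)%N ->
  potential (shift n m b i w) = potential w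
   + (weight i * (shift n m b i w i - w i) + weight i.+1 * (shift n m b i w i.+1 - w i.+1)).
Proof.
move=> le_im; rewrite /potential !mulrBr.
rewrite (@sum_eq_except2 m.+2 i i.+1 (fun=> true) (fun j => weight j * shift n m b i w j)
  (fun j => weight j * w j)) //; [lia.. | by move=> j _ *; rewrite shift_other].
Qed.

Lemma potential_outer w : (forall j, (1 <= j <= m)%N -> w j = 0) ->
  potential w = weight 0 * w 0%N + weight m.+1 * w m.+1.
Proof.
move=> w_inner; rewrite /potential (@sum_outer (fun=> true) (fun j => weight j * w j)) //.
by move=> j /w_inner ->; rewrite mulr0.
Qed.

Lemma weighted_entry_ge0 w j : is_vertex n m w -> (j < m.+2)%N -> 0 <= weight j * w j.
Proof. by move=> w_vtx lt_j; apply: mulr_ge0; [exact: weight_ge0 | exact: vertex_ge0]. Qed.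

Lemma potential_ge0 w : is_vertex n m w -> 0 <= potential w.
Proof. by move=> w_vtx; apply: sumr_ge0 => j _; apply: weighted_entry_ge0. Qed.

Lemma potential_zero w : (forall j, (j <= m.+1)%N -> w j = 0) -> potential w = 0.
Proof. by move=> w0; rewrite /potential big1 // => j _; rewrite w0 ?mulr0 // -ltnS. Qed.

Lemma potential_le_sum_weight w : 0 <= p <= m%:Z -> is_vertex n m w ->
  potential w <= \sum_(j < m.+2) weight j.
Proof.
move=> p_inner [_ _ w01 _]; apply: ler_sum => j _.
case: (posnP j) => [-> | j_gt0]; first by rewrite weight_first ?mul0r //; lia.
case: (ltnP j m.+1) => [lt_jm | ge_jm].
  by case: (w01 j) => [|->|->]; rewrite ?mulr0 ?mulr1 ?weight_ge0 //; lia.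
have -> : nat_of_ord j = m.+1 by have := ltn_ord j; lia.
by rewrite weight_last ?mul0r //; lia.
Qed.

Hypotheses (n_gt0 : (0 < n)%N) (m_gt0 : (0 < m)%N) (p_range : -1 <= p <= (m.+1)%:Z).

(* Away from the outer buckets a step exchanges one unit between weights that
   differ by one; an outer bucket of positive weight can only lose one unit,
   because the wall forbids the step that would wrap it around modulo n. *)
Lemma potential_wall_step_ge b i w : is_vertex n m w -> (i <= m)%N ->
  wall_step p (i, b) -> potential w - 1 <= potential (shift n m b i w).
Proof.
move=> [/andP [w0_ge0 w0_lt] /andP [wl_ge0 wl_lt] _ _] le_im.
rewrite wall_stepE // potential_shift // => wall.
case: (ltrP i%:Z p) => [lt_ip | le_pi].
  rewrite [weight i.+1]weight_low //.
  have -> : weight i = i%:Z.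
    by case: (posnP i) => [-> | i_gt0]; [rewrite weight_first | rewrite weight_low]; lia.
  case: (ltnP i m) => [lt_im | le_mi].
    rewrite shift_inner_atS //; case: (posnP i) => [-> | i_gt0]; first by case: b in wall *; lia.
    by rewrite shift_inner_at //; case: b in wall *; lia.
  have -> : i = m by lia.
  have -> : b = true by case: b in wall *; lia.
  rewrite shift_inner_at ?shift_atS ?bucket_last //; last lia.
  have := @le_modz n (w m.+1 - 1) n_gt0; nia.
have lt_pi : p < i%:Z by lia.
rewrite weight_high //; case: (ltnP i m) => [lt_im | le_mi].
  rewrite shift_inner_atS // [weight i.+1]weight_high; [|lia..].
  case: (posnP i) => [i0 | i_gt0]; last by rewrite shift_inner_at //; case: b in wall *; lia.
  move: wall lt_pi; rewrite i0 => wall lt_p0.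
  have -> : b = false by case: b in wall *; lia.
  rewrite shift_at bucket_first.
  have := @le_modz n (w 0%N + -1) n_gt0; nia.
have -> : i = m by lia.
have -> : weight m.+1 = 0 by apply: weight_last; lia.
by rewrite shift_inner_at; [case: b in wall *; lia | lia].
Qed.

Lemma potential_walk_le w P : is_vertex n m w -> is_walk n m w P -> is_wall m p P ->
  potential w <= (size P)%:Z + potential (walk_end n m w P).
Proof.
elim: P w => [|[i b] P IH] w w_vtx /=; first lia.
move=> [le_im [shift_vtx walk]] /is_wall_cons [wall_s wall_P].
have := IH _ shift_vtx walk wall_P.
have := potential_wall_step_ge b i w w_vtx le_im wall_s.
rewrite /walk_end /=; lia.
Qed.

Definition descent_step w i b : Prop :=
  [/\ (i <= m)%N, wall_step p (i, b), is_vertex n m (shift n m b i w)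
    & potential (shift n m b i w) = potential w - 1].

Section Descent.

Variable w : nat -> int.
Hypothesis w_vtx : is_vertex n m w.

Lemma descent_step_left i : (i < m)%N -> i.+1%:Z <= p -> w i.+1 = 1 ->
  (forall j, (1 <= j <= i)%N -> w j = 0) -> descent_step w i true.
Proof.
move=> lt_im le_iSp wiS1 w_before.
have at_iS : shift n m true i w i.+1 = 0 by rewrite shift_inner_atS // wiS1 subrr.
have at_i : (1 <= i)%N -> shift n m true i w i = 1.
  by move=> i_gt0; rewrite shift_inner_at ?w_before ?add0r //; lia.
split.
- lia.
- by rewrite wall_stepE; lia.
- by apply: shift_vertex => //; [lia | move/at_i; right | left].
- have weight_iS : weight i.+1 = i.+1%:Z by rewrite weight_low.
  rewrite potential_shift; last lia.
  rewrite at_iS wiS1 weight_iS.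
  case: (posnP i) => [-> | i_gt0]; first by rewrite weight_first; lia.
  by rewrite at_i ?w_before ?weight_low //; lia.
Qed.

Lemma descent_step_right k : (1 <= k <= m)%N -> p < k%:Z -> w k = 1 ->
  (forall j, (k < j <= m)%N -> w j = 0) -> descent_step w k false.
Proof.
move=> k_inner lt_pk wk1 w_after.
have at_k : shift n m false k w k = 0 by rewrite shift_inner_at // wk1; lia.
have at_kS : (k < m)%N -> shift n m false k w k.+1 = 1.
  by move=> lt_km; rewrite shift_inner_atS ?w_after //; lia.
split.
- lia.
- by rewrite wall_stepE; lia.
- by apply: shift_vertex => //; [lia | left | move/at_kS; right].
- have weight_k : weight k = (m.+1 - k)%N%:Z by rewrite weight_high //; lia.
  rewrite potential_shift; last lia.
  rewrite at_k wk1 weight_k.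
  case: (ltnP k m) => [lt_km | le_mk]; last by rewrite (_ : k = m) ?weight_last; lia.
  by rewrite at_kS ?w_after ?weight_high //; lia.
Qed.

Hypothesis w_outer : forall j, (1 <= j <= m)%N -> w j = 0.

Lemma descent_step_first : p = -1 -> 0 < w 0%N -> descent_step w 0 false.
Proof.
move: w_vtx => [/andP [_ w0_lt] _ _ _] p_eq w0_gt0.
have at_0 : shift n m false 0 w 0%N = w 0%N - 1.
  by rewrite shift_at bucket_first modz_small //; lia.
have at_1 : shift n m false 0 w 1%N = 1.
  by rewrite shift_inner_atS ?w_outer //; lia.
split.
- lia.
- by rewrite wall_stepE; lia.
- by apply: shift_vertex => // _; right.
- by rewrite potential_shift ?at_0 ?at_1 ?(w_outer 1) ?weight_high //; lia.
Qed.

Lemma descent_step_last : p = m.+1%:Z -> 0 < w m.+1 -> descent_step w m true.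
Proof.
move: w_vtx => [_ /andP [_ wl_lt] _ _] p_eq wl_gt0.
have at_l : shift n m true m w m.+1 = w m.+1 - 1.
  by rewrite shift_atS bucket_last modz_small //; lia.
have at_m : shift n m true m w m = 1.
  by rewrite shift_inner_at ?w_outer //; lia.
split.
- by [].
- by rewrite wall_stepE; lia.
- by apply: shift_vertex => // [_ | ]; [right | rewrite ltnn].
- by rewrite potential_shift ?at_l ?at_m ?(w_outer m) ?weight_low //; lia.
Qed.

End Descent.

Lemma exists_descent_step w : is_vertex n m w -> 0 < potential w ->
  exists i b, descent_step w i b.
Proof.
move=> w_vtx pot_gt0; have [_ _ w01 _] := w_vtx.
pose one_left j := [&& (1 <= j <= m)%N, j%:Z <= p & w j == 1].
pose one_right j := [&& (1 <= j <= m)%N, p < j%:Z & w j == 1].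
have [/hasP [j _ left_j] | /hasPn no_left] := boolP (has one_left (iota 0 m.+1)).
  case: (ex_minnP (ex_intro one_left j left_j)) => -[|i] left_iS min_iS //.
  move: left_iS => /and3P [iS_inner le_iSp /eqP wiS1].
  exists i, true; apply: descent_step_left => // k k_range.
  case: (w01 k) => [|//|wk1]; first lia.
  have /min_iS : one_left k by rewrite /one_left; lia.
  lia.
have [/hasP [j _ right_j] | /hasPn no_right] := boolP (has one_right (iota 0 m.+1)).
  have right_le_m k : one_right k -> (k <= m)%N by case/and3P => /andP [].
  case: (ex_maxnP (ex_intro one_right j right_j) right_le_m) => k right_k max_k.
  move: right_k => /and3P [k_inner lt_pk /eqP wk1].
  exists k, false; apply: descent_step_right => // l l_range.
  case: (w01 l) => [|//|wl1]; first lia.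
  have /max_k : one_right l by rewrite /one_right; lia.
  lia.
have w_outer j : (1 <= j <= m)%N -> w j = 0.
  move=> j_range; case: (w01 j j_range) => // wj1.
  have j_in : j \in iota 0 m.+1 by rewrite mem_iota; lia.
  by move: (no_left j j_in) (no_right j j_in); rewrite /one_left /one_right; lia.
have w0_ge0 := vertex_ge0 w 0 w_vtx (leq0n _).
have wl_ge0 := vertex_ge0 w m.+1 w_vtx (leqnn _).
move: pot_gt0; rewrite potential_outer //.
case: (ltrP p 0) => [p_lt0 | p_ge0].
  have p_eq : p = -1 by lia.
  rewrite weight_last ?weight_high ?p_eq // => pot_gt0.
  by exists 0%N, false; apply: descent_step_first => //; nia.
case: (lerP p m) => [le_pm | lt_mp]; first by rewrite weight_first // weight_last //; lia.
have p_eq : p = m.+1 by lia.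
rewrite weight_first ?weight_low ?p_eq // => pot_gt0.
by exists m, true; apply: descent_step_last => //; nia.
Qed.

(* The weights kill the inner entries and any bucket next to an outer wall; the
   pivot condition then kills the first bucket and the vertex condition the
   last one. *)
Lemma potential_eq0 w : is_vertex n m w -> is_pivot n m w p ->
  potential w = 0 -> forall j, (j <= m.+1)%N -> w j = 0.
Proof.
move=> w_vtx [_ w_pivot] pot0.
have [/andP [w0_ge0 w0_lt] /andP [wl_ge0 wl_lt] _ w_sum] := w_vtx.
have weighted0 j : (j < m.+2)%N -> 0 < weight j -> w j = 0.
  move=> lt_j weight_gt0.
  have term_ge0 (k : 'I_m.+2) : true -> 0 <= weight k * w k.
    by move=> _; apply: weighted_entry_ge0.
  have /eqP := psumr_eq0P term_ge0 pot0 (i := Ordinal lt_j) isT.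
  by rewrite /= mulf_eq0 => /orP [|/eqP //]; lia.
have w_outer j : (1 <= j <= m)%N -> w j = 0.
  by move=> j_range; apply: weighted0; [lia | apply: weight_inner_gt0].
have w0 : w 0%N = 0.
  case: (ltrP p 0) => [p_lt0 | p_ge0].
    by apply: weighted0 => //; rewrite weight_high //; lia.
  move: w_pivot; rewrite (@sum_outer (fun j => j%:Z <= p)) // ifT //.
  case: ifP => [le_lp | _]; last by rewrite addr0 => /dvdz_small_eq0; apply; lia.
  rewrite (weighted0 m.+1) ?weight_low // addr0 => /dvdz_small_eq0; apply; lia.
have wl : w m.+1 = 0.
  move: w_sum; rewrite (@sum_outer (fun=> true)) // w0 add0r.
  by move=> /dvdz_small_eq0; apply; lia.
move=> j le_j; case: (posnP j) => [-> // | j_gt0].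
case: (ltnP j m.+1) => [lt_j | ge_j]; first by apply: w_outer; lia.
by rewrite (_ : j = m.+1) //; lia.
Qed.

Lemma wall_path_of_potential (N : nat) w : is_vertex n m w -> is_pivot n m w p ->
  potential w = N%:Z -> exists P, [/\ is_path_to_zero n m w P, is_wall m p P & size P = N].
Proof.
elim: N w => [|N IH] w w_vtx w_pivot pot_N.
  by exists [::]; split=> //; split=> //; apply: potential_eq0.
have [|i [b [le_im wall w'_vtx pot']]] := exists_descent_step w w_vtx.
  by rewrite pot_N.
have [|P [[walk_P end_P] wall_P size_P]] := IH _ w'_vtx (shift_pivot p b i w le_im wall w_pivot).
  by rewrite pot' pot_N; lia.
exists ((i, b) :: P); split=> //; last by rewrite /= size_P.
by apply/is_wall_cons.
Qed.

Lemma ps_potential v : is_vertex n m v -> is_pivot n m v p -> (ps n m p v)%:Z = potential v.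
Proof.
move=> v_vtx v_pivot.
have [k pot_k] : exists k : nat, potential v = k%:Z.
  by exists `|potential v|%N; rewrite gez0_abs // potential_ge0.
rewrite pot_k (@ps_of_min_wall_len p v k) //; split.
  have [P [path_P wall_P size_P]] := wall_path_of_potential k v v_vtx v_pivot pot_k.
  by exists P.
move=> P [walk_P end_P] wall_P.
have := potential_walk_le v P v_vtx walk_P wall_P.
by rewrite pot_k potential_zero //; lia.
Qed.

End Potential.

Lemma sum_weight q : (q <= m)%N ->
  \sum_(j < m.+2) weight q%:Z j = ('C(q.+1, 2) + 'C((m - q).+1, 2))%N%:Z.
Proof.
move=> le_qm; pose f j := if (j <= q)%N then j else (m.+1 - j)%N.
rewrite (eq_bigr (fun j : 'I_m.+2 => (f j)%:R)); last first.
  by move=> j _; rewrite natz /f /weight; have := ltn_ord j; repeat case: ifP => ?; lia.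
rewrite -natr_sum natz -(big_mkord xpredT f) (big_cat_nat _ (n := q.+1)) //=; last lia.
have -> : (m - q).+1 = (m.+2 - q.+1)%N by lia.
rewrite -bin2_sum -sum_rev_bin2.
by congr (_ + _)%N%:Z; apply: eq_big_nat => j; rewrite /f; case: ifP; lia.
Qed.

End YokeGraph.

Theorem corollary4p12 (n m : nat) (v : nat -> int) (p : int) :
  (1 <= n)%N -> (2 <= m)%N -> is_vertex n m v -> is_pivot n m v p ->
  (ps n m p v)%:Z =
    \sum_(i < m.+2 | (1 <= i)%N && (i%:Z <= p)) (i%:Z * v i)
    + \sum_(i < m.+2 | (p + 1 <= i%:Z) && (i <= m)%N) ((m.+1 - i)%N%:Z * v i)
  /\ (0 <= p <= m%:Z ->
      (ps n m p v)%:Z <= ('C((absz p).+1, 2) + 'C((m - absz p).+1, 2))%N%:Z).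
Proof.
move=> n_gt0 m_ge2 v_vtx v_pivot.
have [p_range _] := v_pivot.
have ps_pot : (ps n m p v)%:Z = potential m p v by apply: ps_potential => //; lia.
split; first by rewrite ps_pot potentialE.
move=> p_inner; rewrite ps_pot -sum_weight; last lia.
by rewrite gez0_abs; [exact: (@potential_le_sum_weight n m p v p_inner v_vtx) | lia].
Qed.
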